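(* Let $A$ be a semiprime non-commutative associative algebra over $\Phi$ with center $Z$. Then: (i) the map $\mathrm{Inn}(A)\to \mathrm{Der}(A)/I_Z$, $\mathrm{ad}\,a\mapsto \mathrm{ad}\,a+I_Z$, is an injective Lie algebra homomorphism whose image is an essential ideal of $\mathrm{Der}(A)/I_Z$; (ii) if $Z$ contains no non-zero associative ideals of $A$ (in particular, if $A$ is prime), then $I_Z=0$.
   Context: $\Phi$ is a unital commutative ring in which $2$ and $3$ are invertible; all algebras are $\Phi$-modules. $\mathrm{Der}(A)$ is the Lie algebra (under $[\delta,\mu]=\delta\mu-\mu\delta$) of all associative derivations $\delta\colon A\to A$ ($\delta(xy)=\delta(x)y+x\delta(y)$). For $a\in A$, $\mathrm{ad}\,a\colon A\to A$, $y\mapsto ay-ya$, and $\mathrm{Inn}(A)=\{\mathrm{ad}\,a: a\in A\}$ is the ideal of inner derivations. $Z$ is the center of $A$ and $I_Z=\{\delta\in\mathrm{Der}(A): \delta(A)\subseteq Z\}$, a Lie ideal of $\mathrm{Der}(A)$. An ideal of a Lie algebra is essential if it has non-zero intersection with every non-zero ideal. *)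

From HB Require Import structures.
From mathcomp Require Import all_boot all_order all_algebra.
Set Implicit Arguments. Unset Strict Implicit. Unset Printing Implicit Defensive.
Import GRing.Theory.
Local Open Scope ring_scope.

Definition assoc_algebra (Phi : comPzRingType) (A : lmodType Phi)
    (mul : A -> A -> A) : Prop :=
  [/\ forall x y z, mul (mul x y) z = mul x (mul y z),
      forall x y z, mul (x + y) z = mul x z + mul y z,
      forall x y z, mul x (y + z) = mul x y + mul x z,
      forall (k : Phi) x y, mul (k *: x) y = k *: mul x y
    & forall (k : Phi) x y, mul x (k *: y) = k *: mul x y].

Definition alg_ideal (Phi : comPzRingType) (A : lmodType Phi)
    (mul : A -> A -> A) (I : A -> Prop) : Prop :=
  [/\ I 0,
      forall x y, I x -> I y -> I (x + y),
      forall (k : Phi) x, I x -> I (k *: x),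
      forall a x, I x -> I (mul a x)
    & forall a x, I x -> I (mul x a)].

Definition semiprime (Phi : comPzRingType) (A : lmodType Phi)
    (mul : A -> A -> A) : Prop :=
  forall I, alg_ideal mul I ->
    (forall x y, I x -> I y -> mul x y = 0) -> forall x, I x -> x = 0.

Definition prime_alg (Phi : comPzRingType) (A : lmodType Phi)
    (mul : A -> A -> A) : Prop :=
  forall I J, alg_ideal mul I -> alg_ideal mul J ->
    (forall x y, I x -> J y -> mul x y = 0) ->
    (forall x, I x -> x = 0) \/ (forall y, J y -> y = 0).

Definition commutative_alg (A : Type) (mul : A -> A -> A) : Prop :=
  forall x y, mul x y = mul y x.

Definition center (A : Type) (mul : A -> A -> A) (z : A) : Prop :=
  forall x, mul z x = mul x z.

Definition is_der (Phi : comPzRingType) (A : lmodType Phi)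
    (mul : A -> A -> A) (d : A -> A) : Prop :=
  [/\ forall x y, d (x + y) = d x + d y,
      forall (k : Phi) x, d (k *: x) = k *: d x
    & forall x y, d (mul x y) = mul (d x) y + mul x (d y)].

Definition ad (A : zmodType) (mul : A -> A -> A) (a : A) : A -> A :=
  fun y => mul a y - mul y a.

Definition lie (A : zmodType) (d m : A -> A) : A -> A :=
  fun x => d (m x) - m (d x).

Definition in_IZ (Phi : comPzRingType) (A : lmodType Phi)
    (mul : A -> A -> A) (d : A -> A) : Prop :=
  is_der mul d /\ forall x, center mul (d x).

Definition is_inner (A : zmodType) (mul : A -> A -> A) (d : A -> A) : Prop :=
  exists a, forall x, d x = ad mul a x.

Definition der_ideal (Phi : comPzRingType) (A : lmodType Phi)
    (mul : A -> A -> A) (J : (A -> A) -> Prop) : Prop :=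
  (forall d, J d -> is_der mul d) /\
  [/\ J (fun _ => 0),
      forall d m, J d -> J m -> J (fun x => d x + m x),
      forall (k : Phi) d, J d -> J (fun x => k *: d x),
      forall d m, is_der mul d -> J m -> J (lie d m)
    & forall d m, J d -> (forall x, d x = m x) -> J m].

(* Preimage in Der(A) of the image of Inn(A) in Der(A)/I_Z:  Inn(A) + I_Z *)
Definition inn_plus_IZ (Phi : comPzRingType) (A : lmodType Phi)
    (mul : A -> A -> A) (d : A -> A) : Prop :=
  exists a m, in_IZ mul m /\ forall x, d x = ad mul a x + m x.

From HB Require Import structures.
From mathcomp Require Import all_boot all_order all_algebra.
From Stdlib Require Import Classical.
Import GRing.Theory.
Local Open Scope ring_scope.
Set Implicit Arguments. Unset Strict Implicit.

(* Proof of Lemma 2.4 (inner derivations modulo the derivations into the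
   centre) for a semiprime associative algebra A; of the hypotheses on Phi
   only the invertibility of 2 is needed.

   The heart of the argument is that a derivation d with central values
   annihilates all commutators:  d(x)[y,z] = 0.  Indeed d kills commutators
   (d y, d z are central), so centrality of d(xy) gives
   d(x)[y,z] + d(y)[x,z] = 0, whence d(y)[y,z] = 0 as 2 is invertible; then
   c = d(x)[y,z] is central with c^2 = 0, and a semiprime algebra has no
   non-zero central square-zero elements.  Consequences:
   - injectivity: if ad a is in I_Z, then c = [a,x] is central and
     c^2 = (ad a)(x)[a,x] = 0, so c = 0;
   - (ii): {u central | u[y,z] = 0 for all y z} is an ideal inside Z which
     contains the values of any d in I_Z; a prime non-commutative algebra has
     no non-zero ideal inside Z;
   - essentiality: if d in J is not in I_Z, some [ad a, d] = ad(-d a) lies in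
     J but not in I_Z, since otherwise injectivity makes every d a central. *)

Section AssocAlgebra.
Variables (Phi : comPzRingType) (A : lmodType Phi) (mul : A -> A -> A).
Hypothesis hA : assoc_algebra mul.

Lemma mul_assoc x y z : mul (mul x y) z = mul x (mul y z). Proof. by case: hA. Qed.
Lemma mul_addl x y z : mul (x + y) z = mul x z + mul y z. Proof. by case: hA. Qed.
Lemma mul_addr x y z : mul x (y + z) = mul x y + mul x z. Proof. by case: hA. Qed.
Lemma mul_scalel (k : Phi) x y : mul (k *: x) y = k *: mul x y. Proof. by case: hA. Qed.
Lemma mul_scaler (k : Phi) x y : mul x (k *: y) = k *: mul x y. Proof. by case: hA. Qed.

Lemma mul_0l x : mul 0 x = 0.
Proof. by apply: (@addrI _ (mul 0 x)); rewrite -mul_addl !addr0. Qed.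
Lemma mul_0r x : mul x 0 = 0.
Proof. by apply: (@addrI _ (mul x 0)); rewrite -mul_addr !addr0. Qed.
Lemma mul_oppl x y : mul (- x) y = - mul x y.
Proof. by apply/eqP; rewrite -addr_eq0 -mul_addl addNr mul_0l. Qed.
Lemma mul_oppr x y : mul x (- y) = - mul x y.
Proof. by apply/eqP; rewrite -addr_eq0 -mul_addr addNr mul_0r. Qed.
Lemma mul_subl x y z : mul (x - y) z = mul x z - mul y z.
Proof. by rewrite mul_addl mul_oppl. Qed.
Lemma mul_subr x y z : mul x (y - z) = mul x y - mul x z.
Proof. by rewrite mul_addr mul_oppr. Qed.

Lemma der0 d : is_der mul d -> d 0 = 0.
Proof. by case=> dD _ _; apply: (@addrI _ (d 0)); rewrite -dD !addr0. Qed.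
Lemma derB d x y : is_der mul d -> d (x - y) = d x - d y.
Proof.
move=> hd; case: (hd) => dD _ _; rewrite dD; congr (_ + _); apply/eqP.
by rewrite -addr_eq0 -dD addNr der0.
Qed.

Lemma is_der_ext d m : is_der mul d -> (forall x, d x = m x) -> is_der mul m.
Proof. by move=> [dD dZ dM] E; split=> *; rewrite -!E ?dD ?dZ ?dM. Qed.

Lemma der_add d m :
  is_der mul d -> is_der mul m -> is_der mul (fun x => d x + m x).
Proof.
move=> [dD dZ dM] [mD mZ mM]; split=> [x y|k x|x y].
- by rewrite dD mD addrACA.
- by rewrite dZ mZ scalerDr.
- by rewrite dM mM mul_addl mul_addr addrACA.
Qed.

Lemma der_scale (k : Phi) d : is_der mul d -> is_der mul (fun x => k *: d x).
Proof.
move=> [dD dZ dM]; split=> [x y|k' x|x y].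
- by rewrite dD scalerDr.
- by rewrite dZ !scalerA mulrC.
- by rewrite dM mul_scalel mul_scaler scalerDr.
Qed.

Lemma lie_der d m : is_der mul d -> is_der mul m -> is_der mul (lie d m).
Proof.
move=> hd hm; case: (hd) => dD dZ dM; case: (hm) => mD mZ mM.
split=> [x y|k x|x y]; rewrite /lie.
- by rewrite mD dD dD mD opprD addrACA.
- by rewrite mZ dZ dZ mZ scalerBr.
- rewrite mM dD !dM mD !mM mul_subl mul_subr opprD !opprD !addrA.
  rewrite (@GRing.add A).[ACl ((1*5)*(4*8))*((2*7)*(3*6))] /= !subrr !addr0.
  by rewrite addrA.
Qed.

Lemma ad_der a : is_der mul (ad mul a).
Proof.
split=> [x y|k x|x y]; rewrite /ad.
- by rewrite mul_addr mul_addl opprD addrACA.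
- by rewrite mul_scaler mul_scalel -scalerBr.
- by rewrite !mul_subl !mul_subr !mul_assoc addrA addrNK.
Qed.

Lemma ad_add a b x : ad mul (a + b) x = ad mul a x + ad mul b x.
Proof. by rewrite /ad mul_addl mul_addr opprD addrACA. Qed.
Lemma ad_scale (k : Phi) a x : ad mul (k *: a) x = k *: ad mul a x.
Proof. by rewrite /ad mul_scalel mul_scaler scalerBr. Qed.
Lemma ad0 x : ad mul 0 x = 0.
Proof. by rewrite /ad mul_0l mul_0r subrr. Qed.

Lemma lie_ad_r d a x : is_der mul d -> lie d (ad mul a) x = ad mul (d a) x.
Proof.
move=> hd; case: (hd) => _ _ dM; rewrite /lie /ad derB // !dM.
rewrite opprD opprB !addrA.
by rewrite (@GRing.add A).[ACl (1*4)*((2*6)*(3*5))] /= subrr addNr !addr0.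
Qed.

Lemma lie_ad_l d a x : is_der mul d -> lie (ad mul a) d x = ad mul (- d a) x.
Proof.
move=> hd; have := lie_ad_r a x hd; rewrite /lie /ad mul_oppl mul_oppr => E.
by rewrite -opprB E opprB opprK addrC.
Qed.

Lemma center0 : center mul 0. Proof. by move=> x; rewrite mul_0l mul_0r. Qed.
Lemma centerD c c' : center mul c -> center mul c' -> center mul (c + c').
Proof. by move=> h h' x; rewrite mul_addl mul_addr h h'. Qed.
Lemma centerB c c' : center mul c -> center mul c' -> center mul (c - c').
Proof. by move=> h h' x; rewrite mul_subl mul_subr h h'. Qed.
Lemma centerZ (k : Phi) c : center mul c -> center mul (k *: c).
Proof. by move=> h x; rewrite mul_scalel mul_scaler h. Qed.

Lemma der_center d c : is_der mul d -> center mul c -> center mul (d c).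
Proof.
move=> [_ _ dM] hc w; have : d (mul c w) = d (mul w c) by rewrite hc.
by rewrite !dM (hc (d w)) addrC => /addrI.
Qed.

Lemma in_IZ_ext d m : in_IZ mul d -> (forall x, d x = m x) -> in_IZ mul m.
Proof. by move=> [hd dc] E; split=> [|x]; [apply: (is_der_ext hd) | rewrite -E]. Qed.

Lemma IZ0 : in_IZ mul (fun _ => 0).
Proof.
split=> [|_]; last exact: center0.
by split=> *; rewrite ?addr0 ?scaler0 ?mul_0l ?mul_0r ?addr0.
Qed.

Lemma IZ_add d m : in_IZ mul d -> in_IZ mul m -> in_IZ mul (fun x => d x + m x).
Proof. by move=> [hd dc] [hm mc]; split=> [|x]; [apply: der_add | apply: centerD]. Qed.

Lemma IZ_scale (k : Phi) d : in_IZ mul d -> in_IZ mul (fun x => k *: d x).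
Proof. by move=> [hd dc]; split=> [|x]; [apply: der_scale | apply: centerZ]. Qed.

Lemma IZ_lie d m : is_der mul d -> in_IZ mul m -> in_IZ mul (lie d m).
Proof.
move=> hd [hm mc]; split=> [|x]; first exact: lie_der.
by apply: centerB; [apply: der_center|].
Qed.

Lemma inn_plus_IZ_ideal : der_ideal mul (inn_plus_IZ mul).
Proof.
split=> [d [a [m [[hm _] E]]]|].
  by apply: (is_der_ext (der_add (ad_der a) hm)) => x; rewrite E.
split.
- by exists 0, (fun _ => 0); split=> [|x]; [exact: IZ0 | rewrite ad0 addr0].
- move=> d m [a [d' [hd' Ed]]] [b [m' [hm' Em]]].
  exists (a + b), (fun x => d' x + m' x); split=> [|x]; first exact: IZ_add.
  by rewrite Ed Em ad_add addrACA.
- move=> k d [a [m [hm E]]]; exists (k *: a), (fun x => k *: m x).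
  by split=> [|x]; [exact: IZ_scale | rewrite E ad_scale scalerDr].
- move=> D m hD [a [m' [hm' E]]]; exists (D a), (lie D m').
  split=> [|x]; first exact: IZ_lie.
  case: (hD) => DD _ _.
  by rewrite -lie_ad_r // /lie !E DD opprD addrACA.
- by move=> d m [a [m' [hm' E]]] Edm; exists a, m'; split=> // x; rewrite -Edm.
Qed.

Definition commutator_annihilating_center u :=
  center mul u /\ forall y z, mul u (ad mul y z) = 0.

(* They form an ideal of A contained in the centre; for d in I_Z it holds
   every value of d (lemma IZ_ad_annihilates below), which gives (ii). *)
Lemma commutator_annihilating_center_ideal :
  alg_ideal mul commutator_annihilating_center.
Proof.
pose I := commutator_annihilating_center.
have Ir u b : I u -> I (mul u b).
  move=> [uc uk]; split=> [w|y z]; last by rewrite uc mul_assoc uk mul_0r.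
  rewrite mul_assoc -(mul_assoc w) -(uc w) mul_assoc.
  by apply/eqP; rewrite -subr_eq0 -mul_subr uk.
split.
- by split=> [|y z]; [exact: center0 | rewrite mul_0l].
- move=> u v [uc uk] [vc vk]; split=> [|y z]; first exact: centerD.
  by rewrite mul_addl uk vk addr0.
- move=> k u [uc uk]; split=> [|y z]; first exact: centerZ.
  by rewrite mul_scalel uk scaler0.
- by move=> b u hu; rewrite -(proj1 hu); apply: Ir.
- by move=> b u; apply: Ir.
Qed.

(* A prime non-commutative algebra has no non-zero ideal inside its centre:
   such an ideal I annihilates every commutator, since
   u [p,q] = (u p) q - (u q) p = q (u p) - q (u p) = 0, so the annihilator
   of I, an ideal, contains all commutators and hence is non-zero. *)
Lemma prime_no_central_ideal : prime_alg mul -> ~ commutative_alg mul ->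
  forall I, alg_ideal mul I -> (forall x, I x -> center mul x) ->
  forall x, I x -> x = 0.
Proof.
move=> hp hnc I hI hIc; case: (hI) => _ _ _ _ Ir.
pose J y := forall x, I x -> mul x y = 0.
have hJ : alg_ideal mul J.
  split=> [x _|y y' hy hy' x hx|k y hy x hx|a y hy x hx|a y hy x hx].
  - by rewrite mul_0r.
  - by rewrite mul_addr hy // hy' // addr0.
  - by rewrite mul_scaler hy // scaler0.
  - by rewrite -mul_assoc hy //; apply: Ir.
  - by rewrite -mul_assoc hy // mul_0l.
have [//|J0] := hp I J hI hJ (fun x y hx hy => hy x hx).
case: hnc => p q; apply/eqP; rewrite -subr_eq0; apply/eqP.
apply: (J0 (ad mul p q)) => x hx.
rewrite /ad mul_subr -[mul x (mul q p)]mul_assoc (hIc x hx q) mul_assoc.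
by rewrite -(hIc _ (Ir p _ hx) q) mul_assoc subrr.
Qed.

Hypothesis hsp : semiprime mul.

(* In a semiprime algebra a central element c with c^2 = 0 vanishes: the
   ideal Phi c + A c it generates has zero square. *)
Lemma central_square_zero c : center mul c -> mul c c = 0 -> c = 0.
Proof.
move=> hc hcc.
pose K u := exists (k : Phi) r, u = k *: c + mul r c.
have hK : alg_ideal mul K.
  split.
  - by exists 0, 0; rewrite scale0r mul_0l addr0.
  - move=> x y [k [r ->]] [k' [r' ->]]; exists (k + k'), (r + r').
    by rewrite scalerDl mul_addl addrACA.
  - move=> k x [k' [r ->]]; exists (k * k'), (k *: r).
    by rewrite scalerDr scalerA mul_scalel.
  - move=> a x [k [r ->]]; exists 0, (k *: a + mul a r).
    by rewrite scale0r add0r mul_addr mul_scaler mul_addl mul_scalel -mul_assoc.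
  - move=> a x [k [r ->]]; exists 0, (k *: a + mul r a).
    by rewrite scale0r add0r !mul_addl !mul_scalel !mul_assoc !(hc a).
have cc_r r : mul c (mul r c) = 0 by rewrite -mul_assoc hc mul_assoc hcc mul_0r.
have rc_c r : mul (mul r c) c = 0 by rewrite mul_assoc hcc mul_0r.
have cK : K c by exists 1, 0; rewrite scale1r mul_0l addr0.
apply: (hsp hK _ cK) => x y [k [r ->]] [k' [r' ->]].
rewrite mul_addl !mul_addr !mul_scalel !mul_scaler hcc cc_r rc_c mul_assoc cc_r.
by rewrite mul_0r !scaler0 !addr0.
Qed.

Hypothesis h2 : exists u : Phi, 2%:R * u = 1.

Lemma double_eq0 (v : A) : v + v = 0 -> v = 0.
Proof.
case: h2 => u hu hv.
by rewrite -[v]scale1r -hu mulrC -scalerA scaler_nat mulr2n hv scaler0.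
Qed.

Section CentralDerivation.
Variable d : A -> A.
Hypothesis hd : in_IZ mul d.

(* d kills commutators, since it takes central values. *)
Lemma IZ_ad y z : d (ad mul y z) = 0.
Proof.
case: hd => hder dc; case: (hder) => _ _ dM.
by rewrite /ad derB // !dM (dc y) (dc z) (addrC (mul y (d z))) subrr.
Qed.

(* Commuting the central element d(xy) with z. *)
Lemma IZ_ad_linear x y z :
  mul (d x) (ad mul y z) + mul (d y) (ad mul x z) = 0.
Proof.
case: hd => [[_ _ dM] dc].
have := dc (mul x y) z; rewrite dM mul_addl mul_addr /ad !mul_subr.
rewrite mul_assoc -(dc y x) mul_assoc -(mul_assoc z) -(dc x z) mul_assoc.
rewrite -(mul_assoc z (d y)) -(dc y z) mul_assoc => E.
by apply/eqP; rewrite addrACA -opprD subr_eq0 E.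
Qed.

Lemma IZ_ad_diag y z : mul (d y) (ad mul y z) = 0.
Proof. exact/double_eq0/IZ_ad_linear. Qed.

Lemma IZ_ad_annihilates x y z : mul (d x) (ad mul y z) = 0.
Proof.
have dc := proj2 hd.
apply: central_square_zero.
- move=> w; apply/eqP; rewrite -subr_eq0.
  rewrite mul_assoc -(mul_assoc w (d x)) -(dc x w) mul_assoc -mul_subr.
  by have := IZ_ad_linear x (ad mul y z) w; rewrite IZ_ad mul_0l addr0 => <-.
- have E : mul (d x) (ad mul y z) = - mul (d y) (ad mul x z).
    by apply/eqP; rewrite -addr_eq0 IZ_ad_linear.
  rewrite [X in mul _ X]E mul_oppr mul_assoc -(mul_assoc (ad mul y z) (d y)) -(dc y).
  by rewrite IZ_ad_diag mul_0l mul_0r oppr0.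
Qed.

End CentralDerivation.

(* (i), injectivity: if ad a has central values, then c = [a,x] is central
   and c^2 = (ad a)(x) [a,x] = 0, so c = 0. *)
Lemma ad_IZ_trivial a : in_IZ mul (ad mul a) -> forall x, ad mul a x = 0.
Proof.
move=> hI x; apply: central_square_zero; first exact: (proj2 hI).
exact: IZ_ad_annihilates.
Qed.

(* (ii): the values of d lie in an ideal contained in the centre. *)
Lemma IZ_trivial_of_no_central_ideal :
  (forall I, alg_ideal mul I -> (forall x, I x -> center mul x) ->
     forall x, I x -> x = 0) ->
  forall d, in_IZ mul d -> forall x, d x = 0.
Proof.
move=> hZ d hd x; apply: (hZ _ commutator_annihilating_center_ideal).
  by move=> u [].
by split=> [|y z]; [exact: (proj2 hd) | exact: IZ_ad_annihilates].
Qed.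

(* (i), essentiality: if d in J is not in I_Z, then some [ad a, d] is in J
   but not in I_Z, for otherwise every ad (d a) lies in I_Z, whence all
   d a are central by injectivity. *)
Lemma inn_plus_IZ_essential J : der_ideal mul J ->
  (exists d, J d /\ ~ in_IZ mul d) ->
  exists d, J d /\ inn_plus_IZ mul d /\ ~ in_IZ mul d.
Proof.
move=> [Jder [_ _ _ Jlie _]] [d [Jd notIZ]]; have hd := Jder d Jd.
have [allIZ|/not_all_ex_not [a na]] :=
  classic (forall a, in_IZ mul (lie (ad mul a) d)); last first.
  exists (lie (ad mul a) d); split; first exact: Jlie (ad_der a) Jd.
  split=> //; exists (- d a), (fun _ => 0); split; first exact: IZ0.
  by move=> x; rewrite lie_ad_l // addr0.
case: notIZ; split=> // x y.
have hIZ : in_IZ mul (ad mul (- d x)).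
  by apply: (in_IZ_ext (allIZ x)) => z; rewrite lie_ad_l.
have := ad_IZ_trivial hIZ y; rewrite /ad mul_oppl mul_oppr opprK => /eqP.
by rewrite addrC subr_eq0 => /eqP.
Qed.

End AssocAlgebra.
Unset Implicit Arguments. Set Strict Implicit.

Theorem lemma2p4 (Phi : comPzRingType) (A : lmodType Phi) (mul : A -> A -> A)
  (h2 : exists u : Phi, 2%:R * u = 1) (h3 : exists u : Phi, 3%:R * u = 1)
  (hA : assoc_algebra mul) (hsp : semiprime mul) (hnc : ~ commutative_alg mul) :
  (* (i) *)
  ( (* ad a is a derivation; Inn(A) is a Lie subalgebra (ad is a Lie hom),
       so a+I_Z composed with inclusion is a Lie algebra homomorphism *)
    (forall a, is_der mul (ad mul a))
    /\ (forall a b, is_inner mul (lie (ad mul a) (ad mul b)))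
    (* injectivity of ad a |-> ad a + I_Z *)
    /\ (forall a, in_IZ mul (ad mul a) -> forall x, ad mul a x = 0)
    (* the image (Inn(A)+I_Z)/I_Z is an ideal of Der(A)/I_Z *)
    /\ der_ideal mul (inn_plus_IZ mul)
    (* ... and it is essential: every non-zero ideal J/I_Z of Der(A)/I_Z
       (J an ideal of Der(A) containing I_Z properly) meets it non-trivially *)
    /\ (forall J, der_ideal mul J ->
          (forall d, in_IZ mul d -> J d) ->
          (exists d, J d /\ ~ in_IZ mul d) ->
          exists d, J d /\ inn_plus_IZ mul d /\ ~ in_IZ mul d) )
  /\
  (* (ii) *)
  ( ((forall I, alg_ideal mul I -> (forall x, I x -> center mul x) ->
        forall x, I x -> x = 0) ->
      forall d, in_IZ mul d -> forall x, d x = 0)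
    /\ (prime_alg mul -> forall d, in_IZ mul d -> forall x, d x = 0) ).
Proof.
split; split.
- exact: ad_der.
- split; first by move=> a b; exists (ad mul a b) => x; exact: lie_ad_r (ad_der hA a).
  split; first exact: ad_IZ_trivial.
  split; first exact: inn_plus_IZ_ideal.
  by move=> J hJ _; apply: inn_plus_IZ_essential.
- exact: IZ_trivial_of_no_central_ideal.
- move=> hp; apply: IZ_trivial_of_no_central_ideal => //.
  exact: prime_no_central_ideal.
Qed.
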